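(* For $n = 2^i$ with $i \ge 1$, there exists a solution to the $(n-2)$-out-of-$n$ picture-hanging puzzle on the nails $\{1,\dots,n\}$ whose length is exactly \[ 6n\log_2(n/2) = 6n(\log_2 n - 1). \]
   Context: Words are elements of the free group $F(V)$ on $V=\{1,\dots,n\}$, written additively ($+$ group operation, $-$ inverse, $0$ identity, the empty word). Length is the number of letters of the freely reduced word. For $S \subseteq V$, $w|_S$ is the image of $w$ under the homomorphism killing the generators in $S$ (''removing the nails in $S$''). For $0 \le k \le n$, a solution to the $k$-out-of-$n$ picture-hanging puzzle is a word $w$ such that for every $S \subseteq V$: $w|_S = 0 \iff |S| \ge k$ (the picture falls exactly when at least $k$ nails are removed). For $n=2$, $k=0$ and the solution is the empty word. *)

From mathcomp Require Import all_boot.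
Set Implicit Arguments. Unset Strict Implicit. Unset Printing Implicit Defensive.

(* Elements of the free group F(V), V = the n nails, represented (as usual)
   by freely reduced words. Nail j+1 of the paper is 'I_n element j.
   A letter (j, false) is the generator j, (j, true) its inverse. *)
Definition letter (n : nat) := ('I_n * bool)%type.

Definition inv_letter n (x : letter n) : letter n := (x.1, ~~ x.2).

Definition freely_reduced n (w : seq (letter n)) : bool :=
  sorted (fun x y => y != inv_letter x) w.

Definition reduce n (w : seq (letter n)) : seq (letter n) :=
  foldr (fun x acc => match acc with
                      | y :: t => if y == inv_letter x then t else x :: acc
                      | [::] => [:: x]
                      end) [::] w.

(* w|_S : image under the homomorphism killing the generators in S. *)
Definition restrict n (S : {set 'I_n}) (w : seq (letter n)) : seq (letter n) :=
  reduce [seq x <- w | x.1 \notin S].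

Definition hanging_solution n (k : nat) (w : seq (letter n)) : Prop :=
  freely_reduced w /\
  forall S : {set 'I_n}, restrict S w = [::] <-> k <= #|S|.

From mathcomp Require Import all_boot zify.
Set Implicit Arguments. Unset Strict Implicit. Unset Printing Implicit Defensive.

(* Split a block of 2m nails into halves A and B, let x_A (pos A) be the
   product of the generators of A in increasing order and X_A (posneg A) be x_A
   followed by x_A with every letter inverted, and put

     W(A u B) = W(A) W(B) [X_A, x_B] [x_A, X_B],   W = 0 on two nails.

   X_A dies as soon as at most one nail of A is left and x_A as soon as none is,
   so keeping at most two nails of a block kills every factor. If exactly three
   nails are kept, either they lie in one half, and only W of that half
   survives, or they split 2 + 1 or 1 + 2, and only [[a, b], c] or [a, [b, c]]
   survives, a nonempty reduced word. Keeping more than three nails cannot kill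
   the word, since killing further nails is a homomorphism. Consecutive letters
   of W always carry different nails, so W is reduced, and its length obeys
   L(2m) = 2 L(m) + 12 m, i.e. L(n) = 6 n (log2 n - 1). *)

Section FreeReduction.

Variable n : nat.
Implicit Types (x y : letter n) (u v w r : seq (letter n)).

Definition cons_reduce x r : seq (letter n) :=
  if r is y :: t then (if y == inv_letter x then t else x :: r) else [:: x].

Lemma reduce_cons x w : reduce (x :: w) = cons_reduce x (reduce w).
Proof. by []. Qed.

Lemma inv_letterK : involutive (@inv_letter n).
Proof. by case=> j b; rewrite /inv_letter negbK. Qed.

Lemma freely_reduced_cons_reduce x r :
  freely_reduced r -> freely_reduced (cons_reduce x r).
Proof.
case: r => [|y t] //= r_red; case: ifP => [_|/negbT yNx].
  exact: path_sorted r_red.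
by rewrite /freely_reduced /= yNx.
Qed.

Lemma freely_reduced_reduce w : freely_reduced (reduce w).
Proof. by elim: w => //= x w; apply: freely_reduced_cons_reduce. Qed.

Lemma reduce_id w : freely_reduced w -> reduce w = w.
Proof.
elim: w => // x w IHw xw_red.
rewrite reduce_cons IHw; last exact: path_sorted xw_red.
by case: w xw_red {IHw} => //= y w /andP[/negbTE ->].
Qed.

Lemma reduce_cancel x w : reduce (x :: inv_letter x :: w) = reduce w.
Proof.
rewrite !reduce_cons; have := freely_reduced_reduce w.
case: (reduce w) => [|y t] /=; first by rewrite eqxx.
rewrite inv_letterK; case: (eqVneq y x) => [-> xt_red|_ _]; last by rewrite /= eqxx.
by case: t xt_red => [|z t] //= /andP[/negbTE ->].
Qed.

Lemma reduce_catr u v : reduce (u ++ reduce v) = reduce (u ++ v).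
Proof.
have foldE r : reduce (u ++ r) = foldr cons_reduce (reduce r) u.
  exact: foldr_cat.
by rewrite !foldE reduce_id ?freely_reduced_reduce.
Qed.

Definition inv_word u := rev (map (@inv_letter n) u).

Definition comm u v := u ++ v ++ inv_word u ++ inv_word v.

Lemma size_comm u v : size (comm u v) = 2 * (size u + size v).
Proof. rewrite /comm /inv_word !size_cat !size_rev !size_map; lia. Qed.

Lemma reduce_cat_invK u v : reduce (u ++ inv_word u ++ v) = reduce v.
Proof.
elim: u v => // x u IHu v.
rewrite /inv_word map_cons rev_cons -cats1 -!catA cat_cons reduce_cons IHu.
by rewrite -reduce_cons reduce_cancel.
Qed.

(* Well-definedness of the homomorphism of free groups induced by g. *)
Lemma reduce_flatten_map (g : letter n -> seq (letter n)) w v :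
    (forall x, g (inv_letter x) = inv_word (g x)) ->
  reduce (flatten (map g (reduce w)) ++ v) = reduce (flatten (map g w) ++ v).
Proof.
move=> gV; elim: w => //= x w IHw.
have -> : reduce (flatten (map g (cons_reduce x (reduce w))) ++ v) =
          reduce (g x ++ flatten (map g (reduce w)) ++ v).
  case: (reduce w) => [|y t] /=; first by rewrite cats0.
  case: eqP => [->|_] /=; last by rewrite -catA.
  by rewrite gV -[(_ ++ _) ++ v]catA reduce_cat_invK.
by rewrite -catA -reduce_catr IHw reduce_catr.
Qed.

Lemma reduce_catl u v : reduce (reduce u ++ v) = reduce (u ++ v).
Proof.
have := @reduce_flatten_map (fun x => [:: x]) u v.
by rewrite !flatten_map1 !map_id; apply.
Qed.

Lemma reduce_catl_eq0 u v : reduce u = [::] -> reduce (u ++ v) = reduce v.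
Proof. by rewrite -reduce_catl => ->. Qed.

Lemma reduce_catr_eq0 u v : reduce v = [::] -> reduce (u ++ v) = reduce u.
Proof. by rewrite -reduce_catr => ->; rewrite cats0. Qed.

Lemma reduce_inv_word_eq0 u : reduce u = [::] -> reduce (inv_word u) = [::].
Proof.
by move=> u0; have := reduce_cat_invK u [::]; rewrite reduce_catl_eq0 // cats0.
Qed.

Lemma reduce_comm_eq0 u v :
  reduce u = [::] \/ reduce v = [::] -> reduce (comm u v) = [::].
Proof.
rewrite /comm => -[u0|v0].
  rewrite reduce_catl_eq0 // -reduce_catr.
  rewrite (reduce_catl_eq0 _ (reduce_inv_word_eq0 u0)) reduce_catr.
  by rewrite -[inv_word v]cats0 reduce_cat_invK.
rewrite -reduce_catr (reduce_catl_eq0 _ v0).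
rewrite (reduce_catr_eq0 _ (reduce_inv_word_eq0 v0)) reduce_catr.
by rewrite -[inv_word u]cats0 reduce_cat_invK.
Qed.

Definition filter_nails (p : pred 'I_n) w := [seq x <- w | p x.1].

Lemma reduce_filter_nails p w :
  reduce (filter_nails p (reduce w)) = reduce (filter_nails p w).
Proof.
pose g x := if p x.1 then [:: x] else [::].
have filterE u : filter_nails p u = flatten (map g u) ++ [::].
  by rewrite cats0; elim: u => //= x u ->; rewrite /g; case: (p x.1).
by rewrite !filterE reduce_flatten_map // => x; rewrite /g /=; case: (p x.1).
Qed.

Lemma filter_nails_cat p u v :
  filter_nails p (u ++ v) = filter_nails p u ++ filter_nails p v.
Proof. exact: filter_cat. Qed.

Lemma filter_nails_comm p u v :
  filter_nails p (comm u v) = comm (filter_nails p u) (filter_nails p v).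
Proof. by rewrite /comm /filter_nails /inv_word !filter_cat !filter_rev !filter_map. Qed.

End FreeReduction.

Definition chain (a b : nat) (s : seq nat) : bool :=
  if s is x :: t then [&& x == a, last x t == b & path (fun i j => i != j) x t]
  else false.

Lemma chain_cat a b c d s1 s2 :
  chain a b s1 -> chain c d s2 -> b != c -> chain a d (s1 ++ s2).
Proof.
case: s1 => [|x1 t1] //; case: s2 => [|x2 t2] //=.
case/and3P=> -> /eqP b1 p1 /and3P[/eqP-> d2 p2] bNc.
by rewrite last_cat /= d2 cat_path p1 /= b1 bNc.
Qed.

Lemma chain_rev a b s : chain a b s -> chain b a (rev s).
Proof.
case: s => [|x t] //= /and3P[/eqP-> /eqP<- p].
have revE : rev (a :: t) = last a t :: rev (belast a t).
  by rewrite [a :: t]lastI rev_rcons.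
rewrite revE /= eqxx rev_path.
have -> : last (last a t) (rev (belast a t)) = a.
  by rewrite -[LHS]/(last 0 (last a t :: _)) -revE rev_cons last_rcons.
by rewrite eqxx; apply: sub_path p => i j; rewrite eq_sym.
Qed.

Lemma chain_iota a m : 0 < m -> chain a (a + m.-1) (iota a m).
Proof.
case: m => // m _; have lastE k : last k (iota k.+1 m) = k + m.
  by elim: m k => [|m IHm] k; rewrite ?addn0 //= IHm addnS.
rewrite /= eqxx lastE eqxx /=.
by apply: sub_path (iota_ltn_sorted a m.+1) => i j /ltn_eqF ->.
Qed.

Section Nails.

Variable n : nat.
Implicit Types (u v w : seq (letter n)).

Definition nails w : seq nat := [seq val x.1 | x <- w].

Lemma nails_cat u v : nails (u ++ v) = nails u ++ nails v.
Proof. exact: map_cat. Qed.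

Lemma nails_inv_word u : nails (inv_word u) = rev (nails u).
Proof. by rewrite /nails /inv_word map_rev -map_comp. Qed.

Lemma freely_reduced_of_chain a b w : chain a b (nails w) -> freely_reduced w.
Proof.
case: w => [|x w] //= /and3P[_ _].
rewrite (path_map (f := fun y : letter n => val y.1)) /freely_reduced /=.
by apply: sub_path => y z; apply: contra => /eqP->.
Qed.

Lemma chain_comm u v a b c d :
    chain a b (nails u) -> chain c d (nails v) -> b != c -> d != b -> a != d ->
  chain a c (nails (comm u v)).
Proof.
move=> cu cv bNc dNb aNd; rewrite /comm !nails_cat !nails_inv_word.
apply: (chain_cat cu _ bNc); apply: (chain_cat cv _ dNb).
exact: (chain_cat (chain_rev cu) (chain_rev cv) aNd).
Qed.

End Nails.

Section HangingWord.

Variables (n : nat) (d : 'I_n).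
Implicit Types (p : pred 'I_n) (s A B : seq nat).

(* Nails are indexed by nat; the junk index d for j >= n never occurs below. *)
Definition nail j : 'I_n := insubd d j.

Definition pos s : seq (letter n) := [seq (nail j, false) | j <- s].
Definition neg s : seq (letter n) := [seq (nail j, true) | j <- s].
Definition posneg s := pos s ++ neg s.

Definition block_comm A B := comm (posneg A) (pos B) ++ comm (pos A) (posneg B).

(* The word on the 2 ^ t.+1 nails off, ..., off + 2 ^ t.+1 - 1. *)
Fixpoint hanging_word t off :=
  if t is t'.+1 then
    let m := 2 ^ t'.+1 in
    hanging_word t' off ++ hanging_word t' (off + m) ++
    block_comm (iota off m) (iota (off + m) m)
  else [::].

Lemma hanging_wordS t off :
  hanging_word t.+1 off =
    hanging_word t off ++ hanging_word t (off + 2 ^ t.+1) ++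
    block_comm (iota off (2 ^ t.+1)) (iota (off + 2 ^ t.+1) (2 ^ t.+1)).
Proof. by []. Qed.

Lemma size_block_comm A B : size (block_comm A B) = 6 * (size A + size B).
Proof. rewrite size_cat !size_comm /posneg !size_cat !size_map; lia. Qed.

Lemma size_hanging_word t off : size (hanging_word t off) = 6 * 2 ^ t.+1 * t.
Proof.
elim: t off => // t IHt off.
rewrite hanging_wordS size_cat size_cat size_block_comm !IHt !size_iota.
rewrite [2 ^ t.+2]expnS; lia.
Qed.

Lemma nails_pos_neg s :
  {in s, forall j, j < n} -> nails (pos s) = s /\ nails (neg s) = s.
Proof.
move=> lt_s; rewrite /nails -!map_comp -[s in _ = s]map_id.
by split; apply/eq_in_map => j /lt_s; rewrite /= val_insubd => ->.
Qed.

Lemma chain_block_comm A B a b c e :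
    {in A ++ B, forall j, j < n} -> chain a b A -> chain c e B ->
    uniq [:: a; b; c; e] ->
  chain a c (nails (block_comm A B)).
Proof.
move=> lt_AB cA cB; rewrite /= !inE !negb_or -!andbA.
case/and5P=> aNb aNc aNe bNc /and3P[bNe cNe _].
have [pA nA] : nails (pos A) = A /\ nails (neg A) = A.
  by apply: nails_pos_neg => j jA; rewrite lt_AB ?mem_cat ?jA.
have [pB nB] : nails (pos B) = B /\ nails (neg B) = B.
  by apply: nails_pos_neg => j jB; rewrite lt_AB ?mem_cat ?jB ?orbT.
have eNb : e != b by rewrite eq_sym.
rewrite nails_cat; apply: (chain_cat _ _ (_ : c != a)); last by rewrite eq_sym.
  apply: chain_comm bNc eNb aNe; last by rewrite pB.
  by rewrite nails_cat pA nA; apply: (chain_cat cA cA); rewrite eq_sym.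
apply: chain_comm bNc eNb aNe; first by rewrite pA.
by rewrite nails_cat pB nB; apply: (chain_cat cB cB); rewrite eq_sym.
Qed.

Lemma chain_hanging_word t off :
  off + 2 ^ t.+2 <= n -> chain off (off + 2 ^ t.+1) (nails (hanging_word t.+1 off)).
Proof.
have chain_blk m o : 1 < m -> o + m.*2 <= n ->
    chain o (o + m) (nails (block_comm (iota o m) (iota (o + m) m))).
  move=> m_gt1 lt_n; have m_gt0 : 0 < m by lia.
  apply: (chain_block_comm _ (chain_iota _ m_gt0) (chain_iota _ m_gt0)).
    by move=> j; rewrite -iotaD mem_iota; lia.
  by rewrite /= !inE; lia.
elim: t off => [|t IHt] off lt_n; first exact: chain_blk.
have pow2S : 2 ^ t.+3 = (2 ^ t.+2).*2 by rewrite expnS mul2n.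
have lt_pow : 2 ^ t.+1 < 2 ^ t.+2 by rewrite ltn_exp2l.
have /IHt cA : off + 2 ^ t.+2 <= n by lia.
have /IHt cB : off + 2 ^ t.+2 + 2 ^ t.+2 <= n by lia.
set m := 2 ^ t.+2 in pow2S lt_pow cA cB *.
have cC : chain off (off + m) (nails (block_comm (iota off m) (iota (off + m) m))).
  by apply: chain_blk; lia.
have cBC := chain_cat cB cC; rewrite -nails_cat in cBC.
by rewrite hanging_wordS -/m nails_cat; apply: (chain_cat cA (cBC _)); lia.
Qed.

Lemma freely_reduced_hanging_word t off :
  off + 2 ^ t.+1 <= n -> freely_reduced (hanging_word t off).
Proof. by case: t => // t /chain_hanging_word/freely_reduced_of_chain. Qed.

Lemma filter_nails_block_comm p A B :
  filter_nails p (block_comm A B) =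
  block_comm (filter (preim nail p) A) (filter (preim nail p) B).
Proof.
rewrite /block_comm /posneg filter_nails_cat !filter_nails_comm !filter_nails_cat.
by rewrite /filter_nails !filter_map.
Qed.

Lemma reduce_posneg_eq0 s : size s <= 1 -> reduce (posneg s) = [::].
Proof. by case: s => [|j []] // _; apply: (reduce_cancel (nail j, false) [::]). Qed.

Lemma reduce_block_comm_eq0 A B :
    size A <= 1 \/ size B = 0 -> size A = 0 \/ size B <= 1 ->
  reduce (block_comm A B) = [::].
Proof.
move=> hA hB; rewrite reduce_catl_eq0; apply: reduce_comm_eq0.
  by case: hB => [/size0nil->|/reduce_posneg_eq0]; [left|right].
by case: hA => [/reduce_posneg_eq0|/size0nil->]; [left|right].
Qed.

Lemma reduce_filter_hanging_word_eq0 p t off :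
    count (preim nail p) (iota off (2 ^ t.+1)) <= 2 ->
  reduce (filter_nails p (hanging_word t off)) = [::].
Proof.
elim: t off => // t IHt off.
rewrite [2 ^ t.+2]expnS mul2n -addnn iotaD count_cat => le2.
have trivA : reduce (filter_nails p (hanging_word t off)) = [::].
  by apply: IHt; lia.
have trivB : reduce (filter_nails p (hanging_word t (off + 2 ^ t.+1))) = [::].
  by apply: IHt; lia.
rewrite hanging_wordS 2!filter_nails_cat filter_nails_block_comm.
rewrite (reduce_catl_eq0 _ trivA) (reduce_catl_eq0 _ trivB).
by apply: reduce_block_comm_eq0; rewrite !size_filter; lia.
Qed.

(* Only one commutator survives, and it is [[a, b], c] or [a, [b, c]]. *)
Lemma reduce_block_comm_neq0 A B :
    size A + size B = 3 -> 0 < size A < 3 -> uniq (map nail (A ++ B)) ->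
  reduce (block_comm A B) != [::].
Proof.
move=> sizeAB sizeA.
have [[a [b [c [-> ->]]]]|[a [b [c [-> ->]]]]] :
    (exists a b c, A = [:: a; b] /\ B = [:: c]) \/
    (exists a b c, A = [:: a] /\ B = [:: b; c]).
  by case: A B sizeAB sizeA => [|a [|b [|? ?]]] [|x [|y [|? ?]]] //= _ _;
    [right|left]; do 3!eexists.
all: rewrite [uniq _]/= !inE !negb_or -!andbA => /and4P[ab ac bc _].
all: rewrite /block_comm.
- rewrite reduce_catr_eq0; last first.
    by apply: reduce_comm_eq0; right; apply: reduce_posneg_eq0.
  rewrite reduce_id //.
  rewrite /freely_reduced /comm /inv_word /inv_letter /= !xpair_eqE /= !andbT !andbF.
  by rewrite (eq_sym (nail b) (nail a)) (eq_sym (nail c) (nail b)) ab bc.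
- rewrite reduce_catl_eq0; last first.
    by apply: reduce_comm_eq0; left; apply: reduce_posneg_eq0.
  rewrite reduce_id //.
  rewrite /freely_reduced /comm /inv_word /inv_letter /= !xpair_eqE /= !andbT !andbF.
  by rewrite (eq_sym (nail c) (nail a)) (eq_sym (nail c) (nail b)) ac bc.
Qed.

Lemma uniq_map_nail s : {in s, forall j, j < n} -> uniq s -> uniq (map nail s).
Proof.
move=> lt_s; rewrite map_inj_in_uniq // => j k /lt_s ltj /lt_s ltk.
by move/(congr1 val); rewrite !val_insubd ltj ltk.
Qed.

Lemma reduce_filter_hanging_word_neq0 p t off :
    off + 2 ^ t.+1 <= n -> count (preim nail p) (iota off (2 ^ t.+1)) = 3 ->
  reduce (filter_nails p (hanging_word t off)) != [::].
Proof.
elim: t off => [|t IHt] off lt_n cnt.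
  by have := count_size (preim nail p) (iota off 2); rewrite cnt size_iota.
set m := 2 ^ t.+1 in IHt lt_n cnt *.
have pow2S : 2 ^ t.+2 = m + m by rewrite expnS mul2n addnn.
set A := filter (preim nail p) (iota off m).
set B := filter (preim nail p) (iota (off + m) m).
have sizeAB : size A + size B = 3 by rewrite !size_filter -count_cat -iotaD -pow2S.
have trivA : size A <= 2 -> reduce (filter_nails p (hanging_word t off)) = [::].
  by rewrite size_filter => /reduce_filter_hanging_word_eq0.
have trivB : size B <= 2 ->
    reduce (filter_nails p (hanging_word t (off + m))) = [::].
  by rewrite size_filter => /reduce_filter_hanging_word_eq0.
rewrite hanging_wordS -/m 2!filter_nails_cat filter_nails_block_comm -/A -/B.
have [A0|[A12|A3]] : size A = 0 \/ 0 < size A < 3 \/ size A = 3 by lia.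
- have blk0 : reduce (block_comm A B) = [::] by apply: reduce_block_comm_eq0; lia.
  rewrite (reduce_catl_eq0 _ (trivA _)) ?A0 // (reduce_catr_eq0 _ blk0).
  by apply: IHt; rewrite -?size_filter -/B; lia.
- rewrite (reduce_catl_eq0 _ (trivA _)) ?(reduce_catl_eq0 _ (trivB _)); try lia.
  apply: reduce_block_comm_neq0 => //.
  rewrite -filter_cat -iotaD -pow2S; apply: uniq_map_nail.
    by move=> j; rewrite mem_filter mem_iota; lia.
  exact/filter_uniq/iota_uniq.
- have blk0 : reduce (block_comm A B) = [::] by apply: reduce_block_comm_eq0; lia.
  have rest0 : reduce (filter_nails p (hanging_word t (off + m)) ++
                       block_comm A B) = [::].
    by rewrite (reduce_catl_eq0 _ (trivB _)) ?blk0 //; lia.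
  rewrite (reduce_catr_eq0 _ rest0).
  by apply: IHt; rewrite -?size_filter -/A; lia.
Qed.

Lemma count_preim_nail p : count (preim nail p) (iota 0 n) = #|p|.
Proof.
rewrite -val_enum_ord count_map cardE /enum_mem size_filter count_filter.
by apply: eq_count => j /=; rewrite /nail valKd andbT.
Qed.

Lemma hanging_word_solution t :
  n = 2 ^ t.+1 -> hanging_solution (n - 2) (hanging_word t 0).
Proof.
move=> n_eq; split; first by apply: freely_reduced_hanging_word; rewrite n_eq.
move=> S; set w := hanging_word t 0; set p : pred 'I_n := fun j => j \notin S.
have -> : restrict S w = reduce (filter_nails p w) by [].
have count_iota q : count (preim nail q) (iota 0 (2 ^ t.+1)) = #|q|.
  by rewrite -n_eq count_preim_nail.
have card_p : #|p| = n - #|S|.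
  have -> : #|p| = #|~: S| by apply: eq_card => j; rewrite in_setC.
  by rewrite (cardsCs (~: S)) setCK card_ord.
split=> [w0|le_S].
  rewrite leqNgt; apply/negP => lt_S.
  have /card_geqP[s [uniq_s size_s sub_s]] : 3 <= #|p| by lia.
  pose q : pred 'I_n := fun j => j \in s.
  have filter_qp : filter_nails q (filter_nails p w) = filter_nails q w.
    rewrite /filter_nails -filter_predI; apply: eq_filter => x /=.
    by apply/andb_idr => /sub_s.
  have : reduce (filter_nails q w) = [::].
    by rewrite -filter_qp -reduce_filter_nails w0.
  apply/eqP; apply: reduce_filter_hanging_word_neq0; first by rewrite n_eq.
  by rewrite count_iota -size_s -(card_uniqP uniq_s).
by apply: reduce_filter_hanging_word_eq0; rewrite count_iota; lia.
Qed.

End HangingWord.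

Theorem theorem4 (i : nat) (hi : 1 <= i) :
  exists w : seq (letter (2 ^ i)),
    hanging_solution (2 ^ i - 2) w /\ size w = 6 * 2 ^ i * (i - 1).
Proof.
case: i hi => // t _.
have d : 'I_(2 ^ t.+1) by exists 0; rewrite expn_gt0.
exists (hanging_word d t 0); split; first exact: hanging_word_solution.
by rewrite size_hanging_word subn1.
Qed.
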